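(* If $Q$ is a Jordan loop of order $9$, then $Q$ is a group (i.e. its multiplication is associative).
   Context: A loop is a set $Q$ with a binary operation $\cdot$ (written by juxtaposition) and a neutral element $e$ such that for all $a,b\in Q$ the equations $ax=b$ and $ya=b$ have unique solutions $x,y\in Q$. A Jordan loop is a commutative loop satisfying the Jordan identity $x^2(yx)=(x^2y)x$ for all $x,y$, where $x^2=xx$. *)

From mathcomp Require Import all_boot.
Set Implicit Arguments. Unset Strict Implicit. Unset Printing Implicit Defensive.

Definition is_loop (Q : Type) (mul : Q -> Q -> Q) (e : Q) : Prop :=
  (forall x, mul e x = x /\ mul x e = x) /\
  (forall a b, exists! x, mul a x = b) /\
  (forall a b, exists! y, mul y a = b).

Definition is_jordan_loop (Q : Type) (mul : Q -> Q -> Q) (e : Q) : Prop :=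
  is_loop mul e /\
  (forall x y, mul x y = mul y x) /\
  (forall x y, mul (mul x x) (mul y x) = mul (mul (mul x x) y) x).

Definition associative_op (Q : Type) (mul : Q -> Q -> Q) : Prop :=
  forall x y z, mul x (mul y z) = mul (mul x y) z.

From mathcomp Require Import all_boot.
Set Implicit Arguments. Unset Strict Implicit. Unset Printing Implicit Defensive.

(* In a commutative loop of odd order squaring is a bijection: if z were not a
   square, sending x to the solution of x y = z would be a fixed-point-free
   involution.  Fix a != e and list the loop as e, a, ... so that multiplication
   by a sends the j-th element to one of index at most j + 1.  On these indices
   the Cayley table is a commutative Latin square of order 9 with unit row 0, an
   injective diagonal, this normal form in row 1, and the Jordan identity.  An
   exhaustive search, which fills the upper triangle cell by cell and propagates
   the entries forced by the Jordan identity, shows by evaluation that every such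
   table is associative. *)

Section FixedPointFreeInvolution.
Variables (T : finType) (s : T -> T).
Hypotheses (sK : involutive s) (s_neq : forall x, s x != x).

Lemma fpfree_involution_card_even : ~~ odd #|T|.
Proof.
(* [s] swaps the elements ranked below their image with the others. *)
pose A := [set x | enum_rank x < enum_rank (s x)].
have sA : s @: A = ~: A.
  apply/setP=> y; rewrite (can_imset_pre _ sK) !inE sK ltnNge leq_eqVlt val_eqE.
  by rewrite (inj_eq enum_rank_inj) eq_sym (negbTE (s_neq y)).
by rewrite -(cardsC A) -sA card_imset ?addnn ?odd_double //; apply: inv_inj.
Qed.

End FixedPointFreeInvolution.

Section CommutativeLoop.
Variables (Q : finType) (mul : Q -> Q -> Q) (e : Q).
Hypotheses (loopQ : is_loop mul e) (mulC : forall x y, mul x y = mul y x).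

Lemma mul1q x : mul e x = x. Proof. by case: loopQ => /(_ x) []. Qed.
Lemma mulq1 x : mul x e = x. Proof. by case: loopQ => /(_ x) []. Qed.

Lemma mulqI a : injective (mul a).
Proof.
move=> x y Exy; case: loopQ => _ [/(_ a (mul a x)) [z [_ uniq_z]] _].
by rewrite -(uniq_z x) // -(uniq_z y).
Qed.

Lemma square_surj : odd #|Q| -> forall z, exists x, mul x x = z.
Proof.
move=> oddQ z; have [x /eqP|not_sq] := pickP (fun x => mul x x == z).
  by exists x.
pose s x := invF (@mulqI x) z.
have mul_s x : mul x (s x) = z by rewrite f_invF.
have sK : involutive s by move=> x; apply: (@mulqI (s x)); rewrite mul_s mulC.
have s_neq x : s x != x by apply: contraFN (not_sq x) => /eqP {2}<-; rewrite mul_s.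
by have := fpfree_involution_card_even sK s_neq; rewrite oddQ.
Qed.

Lemma square_inj : odd #|Q| -> injective (fun x => mul x x).
Proof.
move=> oddQ x y; have /image_injP sq_inj : #|image (fun x => mul x x) Q| == #|Q|.
  apply/eqP/eq_card => z; have [w <-] := square_surj oddQ z.
  by rewrite image_f.
exact: sq_inj.
Qed.

End CommutativeLoop.

Section GreedyEnumeration.
Variables (T : finType) (s : T -> T) (x0 : T).

Definition greedy_step (l : seq T) : seq T :=
  let y := s (last x0 l) in
  if y \in l then rcons l (head x0 [seq x <- enum T | x \notin l]) else rcons l y.

Definition greedy_iter k := iter k greedy_step [:: x0].
Definition greedy_enum := greedy_iter #|T|.-1.

Lemma size_greedy_iter k : size (greedy_iter k) = k.+1.
Proof. by elim: k => //= k IHk; rewrite /greedy_step; case: ifP; rewrite size_rcons IHk. Qed.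

Lemma greedy_iter_prefix i k : i <= k -> exists t, greedy_iter k = greedy_iter i ++ t.
Proof.
move=> /subnKC <-; elim: (k - i) => [|d [t IHd]]; first by exists [::]; rewrite addn0 cats0.
rewrite addnS /= -/(greedy_iter _) IHd /greedy_step.
by case: ifP => _; rewrite -cats1 -catA; eexists.
Qed.

Lemma uniq_greedy_iter k : k < #|T| -> uniq (greedy_iter k).
Proof.
elim: k => // k IHk ltkT; rewrite /= -/(greedy_iter k) /greedy_step.
have {IHk}uniq_l := IHk (ltnW ltkT); set l := greedy_iter k.
case: ifP => [_|/negbT y_new]; rewrite rcons_uniq uniq_l andbT //.
case Efresh: [seq x <- enum T | x \notin l] => [|y fresh] /=.
  have : #|T| <= size l.
    rewrite -(card_uniqP uniq_l); apply/subset_leq_card/subsetP => x _.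
    have : x \notin [seq x <- enum T | x \notin l] by rewrite Efresh.
    by rewrite mem_filter mem_enum andbT negbK.
  by rewrite size_greedy_iter leqNgt ltkT.
have : y \in [seq x <- enum T | x \notin l] by rewrite Efresh mem_head.
by rewrite mem_filter => /andP[].
Qed.

Let card_gt0 : 0 < #|T|. Proof. by apply/card_gt0P; exists x0. Qed.

Lemma uniq_greedy_enum : uniq greedy_enum.
Proof. by apply: uniq_greedy_iter; rewrite prednK // card_gt0. Qed.

Lemma size_greedy_enum : size greedy_enum = #|T|.
Proof. by rewrite size_greedy_iter prednK // card_gt0. Qed.

Lemma mem_greedy_enum x : x \in greedy_enum.
Proof.
have /subset_cardP : #|[pred y in greedy_enum]| = #|T|.
  by rewrite (card_uniqP uniq_greedy_enum) size_greedy_enum.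
by rewrite subset_predT => /(_ isT)/(_ x); rewrite !inE.
Qed.

Lemma nth_greedy_enum0 : nth x0 greedy_enum 0 = x0.
Proof. by rewrite /greedy_enum; have [t ->] := greedy_iter_prefix (leq0n #|T|.-1). Qed.

Lemma index_greedy_enum_step j : index (s (nth x0 greedy_enum j)) greedy_enum <= j.+1.
Proof.
have [ltj1T|] := ltnP j.+1 #|T|; last first.
  move=> leTj1; rewrite (leq_trans _ leTj1) // ltnW //.
  by rewrite -size_greedy_enum index_mem mem_greedy_enum.
have le_j1 : j.+1 <= #|T|.-1 by rewrite -ltnS prednK.
have [t Ej1] := greedy_iter_prefix le_j1; have [t' Ej] := greedy_iter_prefix (ltnW le_j1).
have -> : nth x0 greedy_enum j = last x0 (greedy_iter j).
  by rewrite /greedy_enum Ej nth_cat size_greedy_iter ltnSn -nth_last size_greedy_iter.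
move: Ej1; rewrite /= -/(greedy_iter j) /greedy_step -/greedy_enum.
case: ifP => y_in; rewrite -cats1 -catA => ->; rewrite index_cat.
  by rewrite y_in ltnW // -(size_greedy_iter j) index_mem.
by rewrite y_in /= eqxx addn0 size_greedy_iter.
Qed.

End GreedyEnumeration.

(* A partial commutative Cayley table on the indices [0, 9); the value 9 marks
   an unknown entry. *)
Definition ptable := seq (seq nat).
Definition pget (P : ptable) i j := nth 9 (nth [::] P i) j.
Definition pset1 (P : ptable) i j v : ptable :=
  set_nth [::] P i (set_nth 9 (nth [::] P i) j v).
Definition pset (P : ptable) i j v := pset1 (pset1 P i j v) j i v.

Definition latin_fits (P : ptable) i j v :=
  all (fun k => ((k == j) || (pget P i k != v)) && ((k == i) || (pget P j k != v)))
    (iota 0 9).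
Definition diag_fits (P : ptable) i j v :=
  (i != j) || all (fun k => (k == i) || (pget P k k != v)) (iota 0 9).
(* Besides the Latin-square condition, [fits] enforces the two extra properties of
   the normalised tables: the bound on row 1 and the injectivity of squaring. *)
Definition fits (P : ptable) i j v :=
  [&& latin_fits P i j v, (i != 1) || (v <= j.+1) & diag_fits P i j v].

Definition entry := (nat * nat * nat)%type.

(* The Jordan identity x^2 (y x) = (x^2 y) x at (x, y): [None] if both sides are
   known and differ, otherwise the entry it forces when exactly one side is
   known (the last product of the other side). *)
Definition jordan_forced (P : ptable) x y : option (seq entry) :=
  let x2 := pget P x x in
  if 9 <= x2 then Some [::] else
  let yx := pget P y x in let x2y := pget P x2 y in
  if (9 <= yx) || (9 <= x2y) then Some [::] else
  let lhs := pget P x2 yx in let rhs := pget P x2y x in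
  if lhs < 9 then
    (if rhs < 9 then (if lhs == rhs then Some [::] else None)
     else Some [:: (x2y, x, lhs)])
  else (if rhs < 9 then Some [:: (x2, yx, rhs)] else Some [::]).

Definition ocat (o1 o2 : option (seq entry)) :=
  if o1 is Some l1 then (if o2 is Some l2 then Some (l1 ++ l2) else None) else None.

Definition involves (P : ptable) (i j x : nat) :=
  [|| x == i, x == j, pget P x x == i | pget P x x == j].

Definition forced_at (P : ptable) x acc :=
  foldr (fun y acc' => ocat (jordan_forced P x y) acc') acc (iota 0 9).
Definition forced_step (P : ptable) i j x acc :=
  if involves P i j x then forced_at P x acc else acc.
(* Entries forced by Jordan instances that may have changed after filling (i, j). *)
Definition forced_by (P : ptable) i j : option (seq entry) :=
  foldr (forced_step P i j) (Some [::]) (iota 0 9).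

Fixpoint fill (P : ptable) (pend : seq (nat * nat)) (fs : seq entry) :
    option (ptable * seq (nat * nat)) :=
  match fs with
  | [::] => Some (P, pend)
  | (i, j, v) :: fs' =>
    let w := pget P i j in
    if w < 9 then (if w == v then fill P pend fs' else None)
    else let P1 := pset P i j v in
      if fits P1 i j v then fill P1 ((i, j) :: pend) fs' else None
  end.

(* Running out of fuel is harmless: propagation only prunes the search. *)
Fixpoint propagate (fuel : nat) (P : ptable) (pend : seq (nat * nat)) : option ptable :=
  if fuel is fuel'.+1 then
    if pend is (i, j) :: pend' then
      if forced_by P i j is Some fs then
        if fill P pend' fs is Some (P1, pend1) then propagate fuel' P1 pend1 else None
      else None
    else Some P
  else Some P.

Definition row_known (P : ptable) x := all (fun y => pget P x y < 9) (iota 0 9).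
Definition passoc (P : ptable) x y z := pget P x (pget P y z) == pget P (pget P x y) z.
Definition complete_assoc (P : ptable) :=
  all (row_known P) (iota 0 9) &&
  all (fun x => all (fun y => all (passoc P x y) (iota 0 9)) (iota 0 9)) (iota 0 9).

Definition branch (P : ptable) i j (k : ptable -> bool) v :=
  let P1 := pset P i j v in
  if fits P1 i j v then
    if propagate 100 P1 [:: (i, j)] is Some P2 then k P2 else true
  else true.

Fixpoint search (cs : seq (nat * nat)) (P : ptable) : bool :=
  if cs is (i, j) :: cs' then
    if pget P i j < 9 then search cs' P else all (branch P i j (search cs')) (iota 0 9)
  else complete_assoc P.

Definition upper_cells : seq (nat * nat) :=
  flatten [seq [seq (i, j) | j <- iota i (9 - i)] | i <- iota 1 8].
Definition unit_ptable : ptable :=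
  [seq [seq (if i == 0 then j else if j == 0 then i else 9) | j <- iota 0 9] | i <- iota 0 9].

Lemma search_unit_ptable : search upper_cells unit_ptable.
Proof. vm_cast_no_check (erefl true). Qed.

Lemma pget_pset1 P i j v x y :
  pget (pset1 P i j v) x y = if (x == i) && (y == j) then v else pget P x y.
Proof.
rewrite /pget /pset1 nth_set_nth /=; case: (x =P i) => [->|//] /=.
by rewrite nth_set_nth /=; case: (y == j).
Qed.

Lemma mem_iota9 k : (k \in iota 0 9) = (k < 9).
Proof. by rewrite mem_iota. Qed.

Section SearchSoundness.
Variable tbl : nat -> nat -> nat.
Hypotheses (tbl_lt : forall i j, i < 9 -> j < 9 -> tbl i j < 9)
  (tblC : forall i j, tbl i j = tbl j i)
  (tblI : forall i j k, i < 9 -> j < 9 -> k < 9 -> tbl i j = tbl i k -> j = k)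
  (tbl_jordan : forall x y, x < 9 -> y < 9 ->
     tbl (tbl x x) (tbl y x) = tbl (tbl (tbl x x) y) x)
  (tbl_row1 : forall j, j < 9 -> tbl 1 j <= j.+1)
  (tbl_sq_inj : forall i k, i < 9 -> k < 9 -> tbl i i = tbl k k -> i = k)
  (tbl0 : forall j, j < 9 -> tbl 0 j = j).

Definition agrees (P : ptable) :=
  forall i j, i < 9 -> j < 9 -> pget P i j < 9 -> pget P i j = tbl i j.

Lemma agrees_pset P i j : agrees P -> agrees (pset P i j (tbl i j)).
Proof.
move=> agP x y ltx lty; rewrite /pset !pget_pset1.
case: ifP => [/andP[/eqP -> /eqP ->] _|_]; first by rewrite tblC.
by case: ifP => [/andP[/eqP -> /eqP ->]|_] //; apply: agP.
Qed.

Lemma fits_tbl P i j : i < 9 -> j < 9 -> agrees P -> fits P i j (tbl i j).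
Proof.
move=> lti ltj agP.
have agP_at a b c d :
    pget P a b = tbl c d -> a < 9 -> b < 9 -> c < 9 -> d < 9 -> tbl a b = tbl c d.
  by move=> Eab lta ltb ltc ltd; rewrite -agP // Eab tbl_lt.
apply/and3P; split.
- apply/allP=> k; rewrite mem_iota9 => ltk; apply/andP; split.
    case: (pget P i k =P tbl i j) => [/agP_at Eik|]; rewrite ?orbT //.
    by rewrite (tblI lti ltk ltj (Eik lti ltk lti ltj)) eqxx.
  case: (pget P j k =P tbl i j) => [/agP_at Ejk|]; rewrite ?orbT //.
  by rewrite (tblC i j) in Ejk; rewrite (tblI ltj ltk lti (Ejk ltj ltk lti ltj)) eqxx.
- by case: (i =P 1) => [->|//]; apply: tbl_row1.
- rewrite /diag_fits; case: (i =P j) => [<-|//]; apply/allP=> k; rewrite mem_iota9 => ltk.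
  case: (pget P k k =P tbl i i) => [/agP_at Ekk|]; rewrite ?orbT //.
  by rewrite (tbl_sq_inj ltk lti (Ekk ltk ltk lti lti)) eqxx.
Qed.

Definition entry_ok (t : entry) := [/\ t.1.1 < 9, t.1.2 < 9 & t.2 = tbl t.1.1 t.1.2].
Definition entries_ok (o : option (seq entry)) :=
  exists2 l, o = Some l & forall t, t \in l -> entry_ok t.

Lemma jordan_forced_ok P x y : x < 9 -> y < 9 -> agrees P -> entries_ok (jordan_forced P x y).
Proof.
move=> ltx lty agP; rewrite /jordan_forced.
case: (ltnP (pget P x x) 9) => ltx2 /=; last by exists [::].
case: (ltnP (pget P y x) 9) => ltyx /=; last by exists [::].
case: (ltnP (pget P (pget P x x) y) 9) => ltx2y /=; last by exists [::].
have Ex2y := agP _ _ ltx2 lty ltx2y.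
have Elhs v : pget P (pget P x x) (pget P y x) = v -> v < 9 -> v = tbl (tbl (pget P x x) y) x.
  move=> <- ltv; rewrite (agP _ _ ltx2 ltyx ltv) (agP _ _ lty ltx ltyx) (agP _ _ ltx ltx ltx2).
  exact: tbl_jordan.
have Erhs v : pget P (pget P (pget P x x) y) x = v -> v < 9 -> v = tbl (tbl (pget P x x) y) x.
  by move=> <- ltv; rewrite (agP _ _ ltx2y ltx ltv) Ex2y.
case: (ltnP (pget P (pget P x x) (pget P y x)) 9) => ltl;
  case: (ltnP (pget P (pget P (pget P x x) y) x) 9) => ltr /=.
- by rewrite (Elhs _ erefl ltl) (Erhs _ erefl ltr) eqxx; exists [::].
- eexists => // t; rewrite inE => /eqP -> /=.
  by split => //; rewrite (Elhs _ erefl ltl) Ex2y.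
- eexists => // t; rewrite inE => /eqP -> /=; split => //.
  by rewrite (Erhs _ erefl ltr) (agP _ _ lty ltx ltyx) (agP _ _ ltx ltx ltx2) tbl_jordan.
- by exists [::].
Qed.

Lemma ocat_ok o1 o2 : entries_ok o1 -> entries_ok o2 -> entries_ok (ocat o1 o2).
Proof.
move=> [l1 -> ok1] [l2 -> ok2]; exists (l1 ++ l2) => // t.
by rewrite mem_cat => /orP[]; [apply: ok1 | apply: ok2].
Qed.

Lemma foldr_iota9_ok (F : nat -> option (seq entry) -> option (seq entry)) acc :
  (forall x o, x < 9 -> entries_ok o -> entries_ok (F x o)) -> entries_ok acc ->
  entries_ok (foldr F acc (iota 0 9)).
Proof.
move=> okF; have : all (fun x => x < 9) (iota 0 9) by [].
by elim: (iota 0 9) => //= x xs IHxs /andP[ltx /IHxs okxs] /okxs; apply: okF.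
Qed.

Lemma forced_by_ok P i j : agrees P -> entries_ok (forced_by P i j).
Proof.
move=> agP; apply: foldr_iota9_ok => [x o ltx ok_o|]; last by exists [::].
rewrite /forced_step; case: ifP => _ //.
apply: foldr_iota9_ok => // y o' lty ok_o'.
exact/ocat_ok/ok_o'/jordan_forced_ok.
Qed.

Lemma fill_ok fs P pend : agrees P -> (forall t, t \in fs -> entry_ok t) ->
  exists P' pend', fill P pend fs = Some (P', pend') /\ agrees P'.
Proof.
elim: fs P pend => [|[[i j] v] fs IHfs] P pend agP okfs; first by exists P, pend.
have [/= lti ltj ->] := okfs _ (mem_head _ _).
have {}okfs t : t \in fs -> entry_ok t by move=> tfs; apply: okfs; rewrite inE tfs orbT.
case: (ltnP (pget P i j) 9) => ltw /=.
  by rewrite (agP _ _ lti ltj ltw) eqxx; apply: IHfs.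
rewrite fits_tbl //; last exact: agrees_pset.
by apply: IHfs => //; apply: agrees_pset.
Qed.

Lemma propagate_ok fuel P pend :
  agrees P -> exists2 P', propagate fuel P pend = Some P' & agrees P'.
Proof.
elim: fuel P pend => [|fuel IHfuel] P [|[i j] pend] agP /=; try by exists P.
have [fs -> okfs] := forced_by_ok i j agP.
by have [P1 [pend1 [-> agP1]]] := fill_ok pend agP okfs; apply: IHfuel.
Qed.

Lemma complete_assoc_tbl P : agrees P -> complete_assoc P ->
  forall x y z, x < 9 -> y < 9 -> z < 9 -> tbl x (tbl y z) = tbl (tbl x y) z.
Proof.
move=> agP /andP[/allP known /allP assocP] x y z ltx lty ltz.
have Etbl a b : a < 9 -> b < 9 -> pget P a b = tbl a b.
  move=> lta ltb; apply: agP => //.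
  by move: (known a); rewrite mem_iota9 => /(_ lta) /allP /(_ b); rewrite mem_iota9; apply.
move: (assocP x); rewrite mem_iota9 => /(_ ltx) /allP /(_ y).
rewrite mem_iota9 => /(_ lty) /allP /(_ z); rewrite mem_iota9 => /(_ ltz) /eqP.
by rewrite (Etbl y z) // (Etbl x y) // !Etbl ?tbl_lt.
Qed.

Lemma search_ok cs P :
  all (fun c => (c.1 < 9) && (c.2 < 9)) cs -> agrees P -> search cs P ->
  forall x y z, x < 9 -> y < 9 -> z < 9 -> tbl x (tbl y z) = tbl (tbl x y) z.
Proof.
elim: cs P => [|[i j] cs IHcs] P; first by move=> _; apply: complete_assoc_tbl.
move=> /andP[/andP[lti ltj] okcs] agP.
have -> : search ((i, j) :: cs) P = if pget P i j < 9 then search cs P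
  else all (branch P i j (search cs)) (iota 0 9) by [].
case: ifP => _; first exact: IHcs.
move=> /allP/(_ (tbl i j)); rewrite mem_iota9 tbl_lt // => /(_ isT).
rewrite /branch fits_tbl //; last exact: agrees_pset.
have agP1 := agrees_pset (i := i) (j := j) agP.
by have [P2 -> agP2] := propagate_ok 100 [:: (i, j)] agP1; apply: IHcs.
Qed.

Lemma agrees_unit_ptable : agrees unit_ptable.
Proof.
move=> i j lti ltj; rewrite /pget /unit_ptable (nth_map 0) ?size_iota //.
rewrite (nth_map 0) ?size_iota // !nth_iota //.
case: (i =P 0) => [-> _|_]; first by rewrite tbl0.
by case: (j =P 0) => [-> _|//]; rewrite tblC tbl0.
Qed.

Lemma tbl_assoc x y z : x < 9 -> y < 9 -> z < 9 -> tbl x (tbl y z) = tbl (tbl x y) z.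
Proof.
have cells_lt : all (fun c => (c.1 < 9) && (c.2 < 9)) upper_cells by [].
exact: (@search_ok _ _ cells_lt (@agrees_unit_ptable) search_unit_ptable).
Qed.

End SearchSoundness.

Section JordanLoopOfOrder9.
Variables (Q : finType) (mul : Q -> Q -> Q) (e : Q).

Definition nonunit : Q := odflt e [pick x | x != e].
Definition enum9 : seq Q := greedy_enum (mul nonunit) e.
Definition elt i := nth e enum9 i.
Definition idx x := index x enum9.
Definition cayley i j := idx (mul (elt i) (elt j)).

Lemma elt_idx x : elt (idx x) = x.
Proof. exact/nth_index/mem_greedy_enum. Qed.

Lemma elt_cayley i j : elt (cayley i j) = mul (elt i) (elt j).
Proof. exact: elt_idx. Qed.

Lemma elt0 : elt 0 = e.
Proof. exact: nth_greedy_enum0. Qed.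

Hypotheses (card9 : #|Q| = 9) (jordanQ : is_jordan_loop mul e).

Let loopQ : is_loop mul e := proj1 jordanQ.
Let mulC : forall x y, mul x y = mul y x := proj1 (proj2 jordanQ).

Lemma idx_lt x : idx x < 9.
Proof. by rewrite -card9 -(size_greedy_enum (mul nonunit) e) index_mem mem_greedy_enum. Qed.

Lemma idx_elt i : i < 9 -> idx (elt i) = i.
Proof.
by move=> lti; rewrite /idx /elt index_uniq ?uniq_greedy_enum // size_greedy_enum card9.
Qed.

Lemma nonunit_neq : nonunit != e.
Proof.
rewrite /nonunit; case: pickP => [x //|all_unit].
suff : #|Q| <= 1 by rewrite card9.
apply/card_le1_eqP => x y _ _.
by move/negbFE/eqP: (all_unit x) ->; move/negbFE/eqP: (all_unit y) ->.
Qed.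

Lemma elt1 : elt 1 = nonunit.
Proof.
have := index_greedy_enum_step (mul nonunit) e 0; rewrite -/enum9 -/(elt 0) elt0.
rewrite (mulq1 loopQ) leq_eqVlt ltnS leqn0 -/(idx nonunit) => /orP[/eqP <-|/eqP E0].
  exact: elt_idx.
by have := elt_idx nonunit; rewrite E0 elt0 => /esym/eqP; rewrite (negbTE nonunit_neq).
Qed.

Lemma cayley_lt i j : i < 9 -> j < 9 -> cayley i j < 9.
Proof. by move=> _ _; apply: idx_lt. Qed.

Lemma cayleyC i j : cayley i j = cayley j i.
Proof. by rewrite /cayley mulC. Qed.

Lemma cayleyI i j k : i < 9 -> j < 9 -> k < 9 -> cayley i j = cayley i k -> j = k.
Proof.
move=> _ ltj ltk /(congr1 elt); rewrite !elt_cayley => /(mulqI loopQ)/(congr1 idx).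
by rewrite !idx_elt.
Qed.

Lemma cayley_jordan x y : x < 9 -> y < 9 ->
  cayley (cayley x x) (cayley y x) = cayley (cayley (cayley x x) y) x.
Proof. by move=> _ _; rewrite [LHS]/cayley [RHS]/cayley !elt_cayley; case: jordanQ => _ [_ ->]. Qed.

Lemma cayley_row1 j : j < 9 -> cayley 1 j <= j.+1.
Proof. by move=> _; rewrite /cayley elt1; apply: index_greedy_enum_step. Qed.

Lemma cayley_sq_inj i k : i < 9 -> k < 9 -> cayley i i = cayley k k -> i = k.
Proof.
move=> lti ltk /(congr1 elt); rewrite !elt_cayley.
have oddQ : odd #|Q| by rewrite card9.
by move=> /(square_inj loopQ mulC oddQ)/(congr1 idx); rewrite !idx_elt.
Qed.

Lemma cayley0 j : j < 9 -> cayley 0 j = j.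
Proof. by move=> ltj; rewrite /cayley elt0 (mul1q loopQ) idx_elt. Qed.

Lemma cayley_assoc i j k : i < 9 -> j < 9 -> k < 9 ->
  cayley i (cayley j k) = cayley (cayley i j) k.
Proof.
exact: (tbl_assoc (tbl := cayley) cayley_lt cayleyC cayleyI cayley_jordan cayley_row1
  cayley_sq_inj cayley0).
Qed.

End JordanLoopOfOrder9.

Theorem theorem3p9 (Q : finType) (mul : Q -> Q -> Q) (e : Q) :
  #|Q| = 9 -> is_jordan_loop mul e -> associative_op mul.
Proof.
move=> card9 jordanQ x y z.
rewrite -[x](elt_idx mul e) -[y](elt_idx mul e) -[z](elt_idx mul e) -!elt_cayley.
by rewrite cayley_assoc ?idx_lt.
Qed.
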